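(* There is an absolute constant $c>0$ such that the following holds. Let $d\geq 2$ and $n\geq 2$ be integers and let $G$ be an acyclic directed graph on $n$ vertices in which every vertex has outdegree at most $d$, and which contains a directed Hamilton path. Then $G$ contains an induced directed path on at least $c\,\frac{\log n}{\log d}$ vertices.
   Context: A directed path $x_1\to x_2\to\dots\to x_k$ in a directed graph $G$ is induced if the only arcs of $G$ between vertices of $\{x_1,\dots,x_k\}$ (in either direction) are the arcs $x_i\to x_{i+1}$, $1\le i<k$. A directed Hamilton path is a directed path visiting every vertex. Logarithms are natural logarithms. *)

From mathcomp Require Import all_boot.
From Stdlib Require Import Reals.
Set Implicit Arguments. Unset Strict Implicit. Unset Printing Implicit Defensive.

(* A directed graph on vertex set T is an arc relation e : rel T
   (e x y means there is an arc x -> y). *)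

Definition acyclic (T : finType) (e : rel T) : Prop :=
  forall (x : T) (p : seq T), p != [::] -> path e x p -> last x p != x.

Definition outdeg (T : finType) (e : rel T) (x : T) : nat := #|[set y | e x y]|.

Definition is_dipath (T : finType) (e : rel T) (s : seq T) : Prop :=
  uniq s /\ sorted e s.

Definition has_hamilton_dipath (T : finType) (e : rel T) : Prop :=
  exists s : seq T, is_dipath e s /\ size s = #|T|.

Definition is_induced_dipath (T : finType) (e : rel T) (s : seq T) : Prop :=
  is_dipath e s /\
  forall i j : nat, i < size s -> j < size s ->
    forall x0 : T, e (nth x0 s i) (nth x0 s j) -> j = i.+1.

From mathcomp Require Import all_boot.
From Stdlib Require Import Reals Lra.
From mathcomp Require Import zify.
Set Implicit Arguments. Unset Strict Implicit. Unset Printing Implicit Defensive.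

(* Every vertex is reachable from the start r of the Hamilton path. Let t be a
   vertex at maximal distance K from r and p a shortest path from r to t. In an
   acyclic graph a shortest path is induced: an arc jumping forward along p
   would shorten it, and an arc pointing backwards would close a cycle. All n
   vertices lie within distance K of r, and with outdegrees at most d >= 2 the
   ball of radius K has fewer than d^(K+1) vertices, so p has K + 1 > log n / log d
   vertices; the constant c = 1 works. *)

Lemma path_slice (T : Type) (e : rel T) x0 x p i j :
  path e x p -> i <= j <= size p ->
  exists q, [/\ path e (nth x0 (x :: p) i) q,
                last (nth x0 (x :: p) i) q = nth x0 (x :: p) j & size q = j - i].
Proof.
elim: p x i j => [|y p IH] x i j /=.
  move=> _; rewrite leqn0 => /andP[ij /eqP j0]; subst j.
  by move: ij; rewrite leqn0 => /eqP ->; exists [::].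
case/andP=> exy pp; case: i j => [|i] [|j] //= ij.
- by exists [::].
- have [q [pq lq sq]] := IH y 0 j pp ij.
  by exists (y :: q); rewrite /= exy pq lq sq subn0.
- exact: IH.
Qed.

Section ShortestPaths.

Variables (T : finType) (e : rel T).
Hypothesis e_acyclic : acyclic e.

Lemma shortest_path_induced r p :
  path e r p ->
  (forall q, path e r q -> last r q = last r p -> size p <= size q) ->
  is_induced_dipath e (r :: p).
Proof.
move=> pp shortest; set s := r :: p.
have slice x0 i j : i <= j -> j < size s -> exists q, [/\ path e (nth x0 s i) q,
    last (nth x0 s i) q = nth x0 s j & size q = j - i].
  by move=> ij js; apply: path_slice; rewrite // ij.
split; first split=> //.
  apply/(uniqPn r) => -[i [j [ij js sij]]].
  have [q [pq lq sq]] := slice r i j (ltnW ij) js.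
  have q0 : q != [::] by rewrite -size_eq0 sq subn_eq0 -ltnNge.
  by have := e_acyclic q0 pq; rewrite lq sij eqxx.
move=> i j iS jS x0 eij.
case: (ltngtP j i.+1) => // ji.
  (* an arc back to an earlier vertex closes a cycle *)
  have [q [pq lq _]] := slice x0 j i (ji : j <= i) iS.
  have q0 : rcons q (nth x0 s j) != [::] by rewrite -size_eq0 size_rcons.
  have pc : path e (nth x0 s j) (rcons q (nth x0 s j)) by rewrite rcons_path pq lq eij.
  by have := e_acyclic q0 pc; rewrite last_rcons eqxx.
(* an arc skipping ahead shortens the path *)
have [q1 [pq1 lq1 sq1]] := slice x0 0 i (leq0n _) iS.
have [q2 [pq2 lq2 sq2]] := slice x0 j (size p) jS (leqnn _).
have := shortest (q1 ++ nth x0 s j :: q2).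
rewrite cat_path pq1 lq1 /= eij pq2 last_cat lq1 /= lq2 -last_nth.
move=> /(_ isT erefl); rewrite size_cat /= sq1 sq2.
by move: jS; rewrite /s /=; lia.
Qed.

End ShortestPaths.

Section Balls.

Variables (T : finType) (e : rel T).

Definition succ_set (A : {set T}) : {set T} := \bigcup_(x in A) [set y | e x y].

Fixpoint ball (r : T) (k : nat) : {set T} :=
  if k is k'.+1 then r |: succ_set (ball r k') else [set r].

Lemma ballP r k t :
  reflect (exists q, [/\ path e r q, last r q = t & size q <= k]) (t \in ball r k).
Proof.
elim: k t => [|k IH] t /=.
  rewrite inE; apply: (iffP eqP) => [->|[[|y q] [_ <-]] //]; first by exists [::].
apply: (iffP setU1P) => [[->|/bigcupP[x /IH[q [pq <- sq]]]]|[q [pq <- sq]]].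
- by exists [::].
- by rewrite inE => ex; exists (rcons q t); rewrite rcons_path last_rcons size_rcons pq ex.
case/lastP: q pq sq => [|q y]; [by left | rewrite rcons_path last_rcons size_rcons].
case/andP=> pq ey sq; right; apply/bigcupP; exists (last r q); last by rewrite inE.
by apply/IH; exists q.
Qed.

Lemma card_succ_set d (A : {set T}) :
  (forall x, outdeg e x <= d) -> #|succ_set A| <= #|A| * d.
Proof.
move=> outdeg_d; rewrite -sum_nat_const.
apply: (big_ind2 (fun (B : {set T}) m => #|B| <= m)) => //.
- by rewrite cards0.
- move=> B1 m1 B2 m2 h1 h2; apply: leq_trans (leq_card_setU _ _) _.
  exact: leq_add.
- by move=> x _; apply: outdeg_d.
Qed.

Lemma card_ball d r k :
  2 <= d -> (forall x, outdeg e x <= d) -> #|ball r k| < expn d k.+1.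
Proof.
move=> d2 outdeg_d; elim: k => [|k IH] /=; first by rewrite cards1; lia.
have := card_succ_set (ball r k) outdeg_d.
rewrite cardsU1 expnS; set a := #|_|; set b := #|_|.
by case: (_ \notin _) => /=; nia.
Qed.

Lemma farthest_shortest_path r k : ball r k = setT ->
  exists p, [/\ path e r p, ball r (size p) = setT &
    forall q, path e r q -> last r q = last r p -> size p <= size q].
Proof.
move=> spanning; have exK : exists k, ball r k == setT by exists k; apply/eqP.
case: (ex_minnP exK) => K /eqP ballK minK.
have [t far] : exists t, forall q, path e r q -> last r q = t -> K <= size q.
  case: K ballK minK => [|k'] ballK minK; first by exists r.
  have [t tk'] : exists t, t \notin ball r k'.
    case: (pickP [pred t | t \notin ball r k']) => [t|all]; first by exists t.
    suff /minK : ball r k' == setT by rewrite ltnn.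
    by apply/eqP/setP => t; rewrite inE; move/negbFE: (all t).
  exists t => q pq lq; rewrite ltnNge; apply: contra tk' => qk'.
  by apply/ballP; exists q.
have /ballP[p [pp lp sp]] : t \in ball r K by rewrite ballK inE.
have sizep : size p = K by apply/eqP; rewrite eqn_leq sp far.
by exists p; rewrite sizep; split=> // q pq; rewrite lp; apply: far.
Qed.

End Balls.

Lemma uniq_full_mem (T : finType) (s : seq T) t :
  uniq s -> size s = #|T| -> t \in s.
Proof.
move=> us sT; have /subset_cardP/(_ (subset_predT (mem s))) : #|s| = #|T|.
  by rewrite (card_uniqP us).
by move/(_ t).
Qed.

Lemma hamilton_ball (T : finType) (e : rel T) r h :
  uniq (r :: h) -> path e r h -> size (r :: h) = #|T| -> ball e r (size h) = setT.
Proof.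
move=> uh ph sh; apply/setP => t; rewrite inE.
have th : index t (r :: h) <= size h by rewrite -ltnS index_mem uniq_full_mem.
have [q [pq lq sq]] := path_slice r ph (th : 0 <= _ <= _).
apply/ballP; exists q; rewrite pq sq subn0 th; split=> //.
by move: lq; rewrite nth_index ?uniq_full_mem.
Qed.

Lemma ln_div_ln_le (x b : R) k :
  (0 < x)%R -> (1 < b)%R -> (x < b ^ k)%R -> (ln x / ln b <= INR k)%R.
Proof.
move=> x0 b1 xbk; have lnb : (0 < ln b)%R by rewrite -ln_1; apply: ln_increasing; lra.
have : (ln x < INR k * ln b)%R by rewrite -ln_pow; [apply: ln_increasing | lra].
move=> lt; apply: (Rmult_le_reg_r (ln b)) => //.
unfold Rdiv; rewrite Rmult_assoc Rinv_l; lra.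
Qed.

Lemma INR_expn d k : INR (expn d k) = (INR d ^ k)%R.
Proof. by elim: k => [|k IH] //; rewrite expnS -multE mult_INR IH. Qed.

Theorem mainTheorem5 :
  exists c : R, (0 < c)%R /\
    forall (n d : nat) (e : rel 'I_n),
      2 <= d -> 2 <= n ->
      acyclic e ->
      (forall x : 'I_n, outdeg e x <= d) ->
      has_hamilton_dipath e ->
      exists s : seq 'I_n, is_induced_dipath e s /\
        (c * (ln (INR n) / ln (INR d)) <= INR (size s))%R.
Proof.
exists 1%R; split; first lra.
move=> n d e d2 n2 ac outdeg_d [[|r h] [[uh ph] sh]].
  by move: sh; rewrite card_ord => n0; rewrite -n0 in n2.
have [p [pp spanning shortest]] := farthest_shortest_path (hamilton_ball uh ph sh).
exists (r :: p); split; first exact: shortest_path_induced.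
rewrite Rmult_1_l; apply: ln_div_ln_le.
- by apply: (lt_INR 0); apply/ltP; lia.
- by apply: (lt_INR 1); apply/ltP.
- rewrite -INR_expn; apply/lt_INR/ltP.
  by rewrite -[X in X < _]card_ord -cardsT -spanning card_ball.
Qed.
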